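(* Let $D$ be a digraph and $(P,\mathrm{org})$ a valid DAG-depth decomposition of $D$ of depth $k$. Then every cop strategy based on $(P,\mathrm{org})$ is a winning strategy in the lift-free cops-and-robber game on $D$ that uses at most $k$ cops.
   Context: A DAG-depth decomposition of a digraph $D$ is a pair $(P,\mathrm{org})$ where $P$ is a directed acyclic graph and $\mathrm{org}:V(P)\to V(D)$ is surjective; $x'\in V(P)$ is called a copy of $\mathrm{org}(x')$. In $P$, roots are vertices of indegree $0$; $w'$ is a descendant of $v'$ if $P$ contains a directed path from $v'$ to $w'$. The depth of $P$ is the maximum number of vertices on a directed path in $P$. The decomposition is valid if for every $v'\in V(P)$ with $\mathrm{org}(v')=v$ and every $u\in N^+_D(v)$, either (1) there is $u'$ with $\mathrm{org}(u')=u$ that is a descendant of $v'$ in $P$, or (2) every directed path in $P$ from any root of $P$ to $v'$ contains a vertex $u'$ with $\mathrm{org}(u')=u$. Lift-free cops-and-robber game on $D$: the robber occupies a vertex, chosen at the start, and knows the cops' positions; the cop player knows the robber's position. In each turn the cop player announces a vertex where a new cop will be placed; before the cop lands the robber may move arbitrarily far along directed paths of $D$ avoiding vertices occupied by cops. Placed cops never move. The robber is caught when a cop is placed on his current vertex. A strategy based on $(P,\mathrm{org})$: each cop move is made ''because of'' a vertex $x'\in V(P)$, meaning the cop is placed on $\mathrm{org}(x')$ unless that vertex already holds a cop, in which case no new cop is placed. The sequence $x'_1,x'_2,\dots$ of vertices of $P$ must satisfy: (i) $x'_1$ is a root of $P$ and each $x'_{i+1}$ is an out-neighbor of $x'_i$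 in $P$; (ii) among the candidates allowed by (i), the chosen one must have in $P$ a directed path to some copy of the robber's current position. *)

From mathcomp Require Import all_boot.
Set Implicit Arguments. Unset Strict Implicit. Unset Printing Implicit Defensive.

Definition is_root (W : finType) (eP : rel W) (x : W) : bool :=
  [forall y, ~~ eP y x].

Definition acyclic (W : finType) (eP : rel W) : Prop :=
  forall x y, eP x y -> ~~ connect eP y x.

(* A directed path in P is a sequence x :: p with [path eP x p];
   it has [size (x :: p)] vertices.  depth of P = max number of vertices on
   a directed path (0 if P is empty). *)
Definition depth_is (W : finType) (eP : rel W) (k : nat) : Prop :=
  (forall x p, path eP x p -> size (x :: p) <= k) /\
  (k = 0 \/ exists x p, path eP x p /\ size (x :: p) = k).

Definition dag_decomposition (V W : finType) (eP : rel W) (org : W -> V) : Prop :=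
  acyclic eP /\ (forall v, exists x, org x = v).

Definition valid_decomposition (V W : finType) (eD : rel V) (eP : rel W)
    (org : W -> V) : Prop :=
  dag_decomposition eP org /\
  forall (v' : W) (u : V), eD (org v') u ->
    (exists u', org u' = u /\ connect eP v' u') \/
    (forall (r : W) (p : seq W), is_root eP r -> path eP r p -> last r p = v' ->
        has (fun y => org y == u) (r :: p)).

(* A play is described by the sequence [xs] = x'_1, ..., x'_n of vertices of P
   because of which the cop moves are made, and the sequence
   [rs] = r_0, r_1, ..., r_n of robber positions: r_0 is the start vertex and
   r_i the robber's vertex when the i-th cop lands.  *)

Definition cops_after (V W : finType) (org : W -> V) (xs : seq W) (j : nat)
  : {set V} := [set v | v \in map org (take j xs)].

Definition robber_move (V : finType) (eD : rel V) (C : {set V}) (a b : V) : Prop :=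
  exists p : seq V,
    [/\ path eD a p, last a p = b & all (fun v => v \notin C) (a :: p)].

Definition strategy_choice (V W : finType) (eP : rel W) (org : W -> V)
    (prev : seq W) (r : V) (x : W) : Prop :=
  (if prev is [::] then is_root eP x else eP (last x prev) x) /\
  (exists y, connect eP x y /\ org y = r).

(* (xs, rs) is a play of the game in which the cops follow a strategy based on
   (P, org), and the robber was not caught before the last round. *)
Definition strategy_play (V W : finType) (eD : rel V) (eP : rel W)
    (org : W -> V) (xs : seq W) (rs : seq V) : Prop :=
  size rs = (size xs).+1 /\
  forall (i : nat) (x0 : W) (r0 : V), i < size xs ->
    [/\ nth r0 rs i \notin cops_after org xs i,
        strategy_choice eP org (take i xs) (nth r0 rs i) (nth x0 xs i) &
        robber_move eD (cops_after org xs i) (nth r0 rs i) (nth r0 rs i.+1)].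

(* The cops walk down a root path x'_1 -> ... -> x'_n of P, so the depth of P
   bounds the number of moves.  The point is that the strategy never gets
   stuck: after x'_n is played, the robber's vertex keeps a copy below x'_n.
   Indeed, if a has a copy y below x'_n and b is an out-neighbour of a not
   yet occupied by a cop, validity gives either a copy of b below y, or a copy
   of b on every root path to y; on the path through x'_1, ..., x'_n the copy
   cannot lie among x'_1, ..., x'_(n-1) (those are cop vertices), so it lies
   at or below x'_n.  Unless the robber is caught on org x'_n, his copy is
   then strictly below x'_n and an out-neighbour of x'_n leads to it. *)

From mathcomp Require Import all_boot.

Set Implicit Arguments.
Unset Strict Implicit.
Unset Printing Implicit Defensive.

Section DirectedAcyclic.

Variables (W : finType) (eP : rel W).

Lemma acyclic_connect_root y :
  acyclic eP -> exists2 r, is_root eP r & connect eP r y.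
Proof.
move=> acyclicP.
pose ancestors z := #|[set w | connect eP w z]|.
have [r ry ancestors_min] :=
  @arg_minnP _ y (connect eP ^~ y) ancestors (connect0 eP y).
exists r => //; apply/forallP => w; apply/negP => ewr.
have wy : connect eP w y := connect_trans (connect1 ewr) ry.
have := ancestors_min w wy; rewrite leqNgt => /negP; apply.
apply: proper_card; apply/properP; split.
  by apply/subsetP => v; rewrite !inE => /connect_trans; apply; apply: connect1.
by exists r; rewrite inE ?connect0 ?acyclicP.
Qed.

Lemma connect_neq_step x y :
  connect eP x y -> y != x -> exists2 z, eP x z & connect eP z y.
Proof.
case/connectP => [[|z p]] /=; first by move=> _ ->; rewrite eqxx.
by case/andP=> exz pzp -> _; exists z => //; apply/connectP; exists p.
Qed.

Definition root_path (s : seq W) : bool :=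
  if s is r :: t then is_root eP r && path eP r t else true.

(* [is_true] inside each branch, to match the first clause of [strategy_choice]. *)
Lemma root_path_rcons s x :
  root_path s ->
  (if s is [::] then is_true (is_root eP x) else is_true (eP (last x s) x)) ->
  root_path (rcons s x).
Proof.
case: s => [|r t] /=; first by move=> _ ->.
by case/andP=> -> pt ex; rewrite rcons_path pt.
Qed.

Lemma depth_root_path k s : depth_is eP k -> root_path s -> size s <= k.
Proof. by case: s => [|r t] [bound _] //= /andP[_ /bound]. Qed.

End DirectedAcyclic.

Lemma card_cops_after (V W : finType) (org : W -> V) xs i :
  #|cops_after org xs i| <= i.
Proof.
rewrite cardsE (leq_trans (card_size _)) // size_map size_take.
by case: ltnP => // /ltnW.
Qed.

Lemma cops_after_size_belast (V W : finType) (org : W -> V) r t :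
  cops_after org (r :: t) (size t) = [set v | v \in map org (belast r t)].
Proof.
by rewrite /cops_after [r :: t]lastI -cats1 -(size_belast r t) take_size_cat.
Qed.

Section StrategyPlay.

Variables (V W : finType) (eD : rel V) (eP : rel W) (org : W -> V).

Definition copy_below (x : W) (v : V) : Prop :=
  exists y, connect eP x y /\ org y = v.

Lemma strategy_play_root_path xs rs :
  strategy_play eD eP org xs rs -> root_path eP xs.
Proof.
case: xs => [|r t] //= [_ play]; apply/andP; split.
  by have [_ [] //] := play 0 r (org r) (ltn0Sn _).
apply/(pathP r) => i lti.
have [_ [] /= + _ _] := play i.+1 r (org r) lti.
by rewrite (last_nth r) size_takel ?(ltnW lti) // -/(take i.+1 (r :: t)) nth_take.
Qed.

Hypothesis valid : valid_decomposition eD eP org.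

Lemma copy_below_step r t a b :
  is_root eP r -> path eP r t -> copy_below (last r t) a -> eD a b ->
  b \notin map org (belast r t) -> copy_below (last r t) b.
Proof.
move=> root_r path_t [y [xy <-]] eab b_free.
have [b_cop | b_not_cop] := boolP (b \in map org (r :: t)).
  move: b_cop; rewrite lastI -cats1 map_cat mem_cat (negbTE b_free) /=.
  by rewrite inE => /eqP ->; exists (last r t).
have [[u' [<- yu']] | every_path] := valid.2 y _ eab.
  by exists u'; split=> //; apply: connect_trans yu'.
have [q path_q y_last] := connectP xy.
have := every_path r (t ++ q) root_r.
rewrite cat_path path_t path_q last_cat -y_last => /(_ isT erefl).
rewrite -cat_cons has_cat => /orP[] /hasP[z zin /eqP org_z].
  by move: b_not_cop; rewrite -org_z map_f.
by exists z; split=> //; apply: (path_connect path_q); rewrite inE zin orbT.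
Qed.

Lemma copy_below_robber_move r t a b :
  is_root eP r -> path eP r t -> copy_below (last r t) a ->
  robber_move eD (cops_after org (r :: t) (size t)) a b ->
  copy_below (last r t) b.
Proof.
move=> root_r path_t + [p [+ <- /= /andP[_ free_p]]].
rewrite cops_after_size_belast in free_p.
elim: p a free_p => [|c p IHp] a //= /andP[c_free free_p] a_below /andP[eac].
apply: IHp free_p _; apply: copy_below_step eac _ => //.
by move: c_free; rewrite inE.
Qed.

Lemma strategy_play_next_choice xs rs r0 :
  strategy_play eD eP org xs rs ->
  nth r0 rs (size xs) \notin cops_after org xs (size xs) ->
  exists x, strategy_choice eP org xs (nth r0 rs (size xs)) x.
Proof.
move=> play; case: xs play => [|r t] play not_caught.
  have [y <-] := valid.1.2 (nth r0 rs 0).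
  have [x root_x xy] := acyclic_connect_root y valid.1.1.
  by exists x; split=> //; exists y.
have /andP[root_r path_t] := strategy_play_root_path play.
have [_ [_ start_below] move] := play.2 (size t) r r0 (ltnSn _).
rewrite (nth_last r (r :: t)) in start_below.
have [y [xy org_y]] := copy_below_robber_move root_r path_t start_below move.
have y_neq : y != last r t.
  apply: contraNneq not_caught => y_last.
  by rewrite inE take_size -org_y y_last map_f ?mem_last.
have [z ez zy] := connect_neq_step xy y_neq.
by exists z; split=> //; exists y.
Qed.

End StrategyPlay.

Theorem theorem3p3 (V W : finType) (eD : rel V) (eP : rel W) (org : W -> V)
    (k : nat) :
  valid_decomposition eD eP org -> depth_is eP k ->
  forall (xs : seq W) (rs : seq V), strategy_play eD eP org xs rs ->
    #|cops_after org xs (size xs)| <= k /\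
    (forall r0 : V, nth r0 rs (size xs) \notin cops_after org xs (size xs) ->
       size xs < k /\
       exists x : W, strategy_choice eP org xs (nth r0 rs (size xs)) x).
Proof.
move=> valid depth xs rs play.
have root_xs := strategy_play_root_path play.
split.
  exact: leq_trans (card_cops_after _ _ _) (depth_root_path depth root_xs).
move=> r0 not_caught.
have [x choice_x] := strategy_play_next_choice valid play not_caught.
split; last by exists x.
rewrite -(size_rcons xs x).
exact: depth_root_path depth (root_path_rcons root_xs choice_x.1).
Qed.
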